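(* Let \(X\) be a complete metric space, \(n\geq 1\), and \(T\colon \mathcal{D}^n(X)\to\mathbb{R}\) a multilinear functional. Then \(T\) is a current if and only if it is an \(\mathbf{L}^\infty\)-current. Moreover, \(\|T\|=\|T\|_{\mathbf{L}^\infty}\).
   Context: \(\mathcal{D}^n(X)\) is the set of pairs \((f,\pi)\) with \(f\colon X\to\mathbb{R}\) bounded Lipschitz and \(\pi=(\pi^{(1)},\dots,\pi^{(n)})\colon X\to\mathbb{R}^n\) Lipschitz; ''multilinear'' means multilinear in \((f,\pi^{(1)},\dots,\pi^{(n)})\). For a map \(g\) between metric spaces, \(\mathrm{Lip}(g)\) denotes its best Lipschitz constant. Given a seminorm \(\mathbf{L}\colon \mathrm{Lip}(X,\mathbb{R}^n)\to\mathbb{R}\) (a ''Lipschitz norm''), a multilinear \(T\colon\mathcal{D}^n(X)\to\mathbb{R}\) is an \(\mathbf{L}\)-current if: (1) whenever \(\pi_i\to\pi\) pointwise with \(\pi\in\mathrm{Lip}(X,\mathbb{R}^n)\) and \(\sup_i\mathbf{L}(\pi_i)<\infty\), then \(T(f,\pi_i)\to T(f,\pi)\); (2) \(T(f,\pi)=0\) whenever some \(\pi^{(i)}\) is constant on an open neighborhood of \(\mathrm{spt}(f)\); (3) there is a finite Borel measure \(\mu\) on \(X\) with \(|T(f,\pi)|\le \mathbf{L}(\pi)^n\int_X|f|\,d\mu\) for all \((f,\pi)\in\mathcal{D}^n(X)\). The minimal such \(\mu\) is the mass measure \(\|T\|_{\mathbf{L}}\). \(T\) is a current (in the sense of Ambrosio–Kirchheim)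 if it satisfies the same three conditions with ''\(\sup_i\mathbf{L}(\pi_i)<\infty\)'' replaced by ''\(\sup_{i,j}\mathrm{Lip}(\pi_i^{(j)})<\infty\)'' and with \(\mathbf{L}(\pi)^n\) replaced by \(\prod_{i=1}^n\mathrm{Lip}(\pi^{(i)})\); its mass measure \(\|T\|\) is the minimal measure \(\mu\) in the corresponding inequality. \(\mathbf{L}^\infty(\pi)=\max_{i=1,\dots,n}\mathrm{Lip}(\pi^{(i)})\). *)

From HB Require Import structures.
From mathcomp Require Import all_boot all_order all_algebra.
From mathcomp Require Import all_classical all_reals all_analysis.
Set Implicit Arguments. Unset Strict Implicit. Unset Printing Implicit Defensive.
Import Order.TTheory GRing.Theory Num.Theory.
Import numFieldNormedType.Exports.
Local Open Scope classical_set_scope.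
Local Open Scope ring_scope.

Section MetricDefs.
Variables (R : realType) (X : Type) (d : X -> X -> R).

Definition is_metric : Prop :=
  [/\ forall x y, 0 <= d x y,
      forall x y, d x y = 0 <-> x = y,
      forall x y, d x y = d y x
    & forall x y z, d x z <= d x y + d y z].

Definition dcauchy (u : nat -> X) : Prop :=
  forall e : R, 0 < e -> exists N : nat,
    forall m k, (N <= m)%N -> (N <= k)%N -> d (u m) (u k) < e.

Definition dconverges (u : nat -> X) (x : X) : Prop :=
  forall e : R, 0 < e -> exists N : nat, forall m, (N <= m)%N -> d (u m) x < e.

Definition dcomplete : Prop := forall u, dcauchy u -> exists x, dconverges u x.

Definition dopen (U : set X) : Prop :=
  forall x, U x -> exists2 r : R, 0 < r & forall y, d x y < r -> U y.

Definition dclosure (A : set X) : set X :=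
  [set x | forall r : R, 0 < r -> exists2 y, A y & d x y < r].

Definition spt (f : X -> R) : set X := dclosure [set x | f x != 0].

Definition lip_with (g : X -> R) (L : R) : Prop :=
  0 <= L /\ forall x y, `|g x - g y| <= L * d x y.

Definition is_lip (g : X -> R) : Prop := exists L, lip_with g L.

Definition Lip (g : X -> R) : R := inf [set L | lip_with g L].

Definition is_bdd (f : X -> R) : Prop := exists M : R, forall x, `|f x| <= M.

Variable n : nat.

(* pi = (pi^(1),...,pi^(n)) : X -> R^n, encoded componentwise *)
Definition lip_tuple (pi : 'I_n -> X -> R) : Prop := forall i, is_lip (pi i).

Definition inD (f : X -> R) (pi : 'I_n -> X -> R) : Prop :=
  [/\ is_bdd f, is_lip f & lip_tuple pi].

Definition upd (pi : 'I_n -> X -> R) (i : 'I_n) (h : X -> R) : 'I_n -> X -> R :=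
  fun j => if j == i then h else pi j.

Definition multilinear (T : (X -> R) -> ('I_n -> X -> R) -> R) : Prop :=
  (forall f g pi (a b : R), inD f pi -> inD g pi ->
     T (fun x => a * f x + b * g x) pi = a * T f pi + b * T g pi) /\
  (forall f pi i g h (a b : R), inD f pi -> is_lip g -> is_lip h ->
     T f (upd pi i (fun x => a * g x + b * h x))
     = a * T f (upd pi i g) + b * T f (upd pi i h)).

Definition Linf (pi : 'I_n -> X -> R) : R := \big[Num.max/0]_(i < n) Lip (pi i).

Definition locality (T : (X -> R) -> ('I_n -> X -> R) -> R) : Prop :=
  forall f pi i, inD f pi ->
    (exists U : set X, [/\ dopen U, spt f `<=` U &
        exists c : R, forall x, U x -> pi i x = c]) ->
    T f pi = 0.

Definition continuity_AK (T : (X -> R) -> ('I_n -> X -> R) -> R) : Prop :=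
  forall f (pis : nat -> 'I_n -> X -> R) (pi : 'I_n -> X -> R),
    is_bdd f -> is_lip f -> (forall k, lip_tuple (pis k)) -> lip_tuple pi ->
    (forall i x, (fun k => pis k i x) @ \oo --> pi i x) ->
    (exists C : R, forall k j, Lip (pis k j) <= C) ->
    (fun k => T f (pis k)) @ \oo --> T f pi.

Definition continuity_L (L : ('I_n -> X -> R) -> R)
    (T : (X -> R) -> ('I_n -> X -> R) -> R) : Prop :=
  forall f (pis : nat -> 'I_n -> X -> R) (pi : 'I_n -> X -> R),
    is_bdd f -> is_lip f -> (forall k, lip_tuple (pis k)) -> lip_tuple pi ->
    (forall i x, (fun k => pis k i x) @ \oo --> pi i x) ->
    (exists C : R, forall k, L (pis k) <= C) ->
    (fun k => T f (pis k)) @ \oo --> T f pi.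

End MetricDefs.

Section MeasureDefs.
Variables (R : realType) (X : pointedType) (d : X -> X -> R) (n : nat).

Definition borel_space := g_sigma_algebraType (dopen d).

Local Open Scope ereal_scope.

Definition mass_bound (w : ('I_n -> X -> R) -> R)
    (T : (X -> R) -> ('I_n -> X -> R) -> R)
    (mu : {finite_measure set borel_space -> \bar R}) : Prop :=
  forall f pi, inD d f pi ->
    (`|T f pi|)%:E <= (w pi)%:E * \int[mu]_x (`|f x|)%:E.

Definition is_min_mass (w : ('I_n -> X -> R) -> R)
    (T : (X -> R) -> ('I_n -> X -> R) -> R)
    (mu : {finite_measure set borel_space -> \bar R}) : Prop :=
  mass_bound w T mu /\
  forall nu : {finite_measure set borel_space -> \bar R},
    mass_bound w T nu -> forall A : set borel_space, measurable A -> mu A <= nu A.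

Local Close Scope ereal_scope.

Definition prodLip (pi : 'I_n -> X -> R) : R := \prod_(i < n) Lip d (pi i).

Definition is_current (T : (X -> R) -> ('I_n -> X -> R) -> R) : Prop :=
  [/\ continuity_AK d T, locality d T &
      exists mu, mass_bound prodLip T mu].

Definition is_L_current (L : ('I_n -> X -> R) -> R)
    (T : (X -> R) -> ('I_n -> X -> R) -> R) : Prop :=
  [/\ continuity_L d L T, locality d T &
      exists mu, mass_bound (fun pi => L pi ^+ n) T mu].

Definition is_mass_measure (T : (X -> R) -> ('I_n -> X -> R) -> R) mu : Prop :=
  is_min_mass prodLip T mu.

Definition is_L_mass_measure (L : ('I_n -> X -> R) -> R)
    (T : (X -> R) -> ('I_n -> X -> R) -> R) mu : Prop :=
  is_min_mass (fun pi => L pi ^+ n) T mu.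

End MeasureDefs.

Arguments is_mass_measure {R X} d {n} T mu.
Arguments is_L_mass_measure {R X} d {n} L T mu.
Arguments is_min_mass {R X} d {n} w T mu.
Arguments mass_bound {R X} d {n} w T mu.

From HB Require Import structures.
From mathcomp Require Import all_boot all_order all_algebra.
From mathcomp Require Import all_classical all_reals all_analysis.
Set Implicit Arguments.
Unset Strict Implicit.
Import Order.TTheory GRing.Theory Num.Theory.
Local Open Scope classical_set_scope.
Local Open Scope ring_scope.

(* Locality (2) is the same condition for both notions, and since
   L^oo(pi) = max_i Lip(pi_i), a sequence of tuples has bounded L^oo-weights
   iff all its Lipschitz constants are bounded, so the continuity conditions
   (1) agree.  For the mass bounds (3), prod_i Lip(pi_i) <= L^oo(pi)^n gives
   one implication.  Conversely, multilinearity makes T f homogeneous in each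
   pi_i: if some Lip(pi_i) = 0, scaling pi_i by t > 0 multiplies T f pi by t
   without increasing L^oo(pi), so T f pi = 0; otherwise dividing each pi_i by
   Lip(pi_i) gives a tuple of L^oo-weight at most 1, whose L^oo mass bound is
   the product mass bound for pi.  So both notions admit the same measures,
   hence have the same minimal one. *)

Section Lipschitz.
Variables (R : realType) (X : Type) (d : X -> X -> R).
Hypothesis d_ge0 : forall x y, 0 <= d x y.
Implicit Types (g : X -> R) (c L : R).

Lemma Lip_le g L : lip_with d g L -> Lip d g <= L.
Proof. by move=> gL; apply: ge_inf => //; exists 0 => M []. Qed.

Lemma lip_with_Lip g : is_lip d g -> lip_with d g (Lip d g).
Proof.
move=> [L0 gL0].
have Lne : [set L | lip_with d g L] !=set0 by exists L0.
have Llb : lbound [set L | lip_with d g L] 0 by move=> L [].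
split=> [|x y]; first exact: lb_le_inf.
have [dxy0|dxy_neq0] := eqVneq (d x y) 0.
  by move: (gL0.2 x y); rewrite dxy0 !mulr0.
have dxy_pos : 0 < d x y by rewrite lt_def dxy_neq0 d_ge0.
rewrite -ler_pdivrMr //; apply: lb_le_inf => // L [_ gL].
by rewrite ler_pdivrMr.
Qed.

Lemma Lip_ge0 g : is_lip d g -> 0 <= Lip d g.
Proof. by move/lip_with_Lip => []. Qed.

Lemma lip_withZ g c L : lip_with d g L ->
  lip_with d (fun x => c * g x) (`|c| * L).
Proof.
move=> [L0 gL]; split=> [|x y]; first by rewrite mulr_ge0.
by rewrite -mulrBr normrM -mulrA ler_wpM2l.
Qed.

Lemma is_lipZ g c : is_lip d g -> is_lip d (fun x => c * g x).
Proof. by move=> [L gL]; exists (`|c| * L); apply: lip_withZ. Qed.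

Lemma LipZ_le g c : is_lip d g -> Lip d (fun x => c * g x) <= `|c| * Lip d g.
Proof. by move=> g_lip; apply/Lip_le/lip_withZ/lip_with_Lip. Qed.

Variable n : nat.
Implicit Types pi : 'I_n -> X -> R.

Lemma Linf_ge0 pi : 0 <= Linf d pi.
Proof. by rewrite /Linf; elim/big_rec: _ => // i x _ x_ge0; rewrite le_max x_ge0 orbT. Qed.

Lemma Lip_le_Linf pi i : Lip d (pi i) <= Linf d pi.
Proof. exact: (le_bigmax 0 (fun j => Lip d (pi j)) i). Qed.

Lemma Linf_le pi C : 0 <= C -> (forall i, Lip d (pi i) <= C) -> Linf d pi <= C.
Proof. by move=> C_ge0 LC; apply: bigmax_le. Qed.

Lemma prod_Lip_le_Linf pi : lip_tuple d pi ->
  \prod_(i < n) Lip d (pi i) <= Linf d pi ^+ n.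
Proof.
move=> pi_lip; rewrite -[n in _ ^+ n]card_ord -prodr_const.
by apply: ler_prod => i _; rewrite Lip_ge0 ?Lip_le_Linf.
Qed.

Lemma continuity_AK_Linf T : continuity_AK d T <-> continuity_L d (Linf d (n:=n)) T.
Proof.
split=> cT f pis pi f_bdd f_lip pis_lip pi_lip pis_cvg [C LC]; apply: cT => //.
  by exists C => k j; apply: le_trans (LC k); apply: Lip_le_Linf.
exists (Num.max C 0) => k; apply: Linf_le => [|j]; first by rewrite le_max lexx orbT.
by rewrite le_max LC.
Qed.

End Lipschitz.

Section Homogeneity.
Variables (R : realType) (X : Type) (d : X -> X -> R) (n : nat).
Variable T : (X -> R) -> ('I_n -> X -> R) -> R.
Hypothesis T_ml : multilinear d T.
Implicit Types (f : X -> R) (pi : 'I_n -> X -> R) (s : 'I_n -> R).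

Lemma inD_upd f pi i h : inD d f pi -> is_lip d h -> inD d f (upd pi i h).
Proof. by move=> [f_bdd f_lip pi_lip] h_lip; split=> // j; rewrite /upd; case: eqP. Qed.

Lemma T_updZ f pi i c : inD d f pi -> T f (upd pi i (fun x => c * pi i x)) = c * T f pi.
Proof.
move=> fpi; have pii_lip : is_lip d (pi i) by case: fpi.
have upd_id : upd pi i (pi i) = pi by apply/funext => j; rewrite /upd; case: eqP => // ->.
have := T_ml.2 f pi i (pi i) (pi i) c 0 fpi pii_lip pii_lip.
have drop0 : (fun x => c * pi i x + 0 * pi i x) = (fun x => c * pi i x).
  by apply/funext => x; rewrite mul0r addr0.
by rewrite drop0 upd_id mul0r addr0.
Qed.

Definition scale_on (r : seq 'I_n) s pi : 'I_n -> X -> R :=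
  fun j x => if j \in r then s j * pi j x else pi j x.

Lemma inD_scale_on f r s pi : inD d f pi -> inD d f (scale_on r s pi).
Proof.
move=> [f_bdd f_lip pi_lip]; split=> // j; rewrite /scale_on.
by case: (j \in r) => //; apply: is_lipZ.
Qed.

Lemma T_scale_on f r s pi : uniq r -> inD d f pi ->
  T f (scale_on r s pi) = (\prod_(j <- r) s j) * T f pi.
Proof.
move=> + fpi; elim: r => [|i r IHr] /=.
  by rewrite big_nil mul1r.
move=> /andP[i_notin_r r_uniq].
have -> : scale_on (i :: r) s pi = upd (scale_on r s pi) i (fun x => s i * scale_on r s pi i x).
  apply/funext => j; apply/funext => x; rewrite /upd /scale_on in_cons.
  by case: eqP => [->|_] //=; rewrite (negbTE i_notin_r).
by rewrite T_updZ ?IHr ?big_cons ?mulrA //; apply: inD_scale_on.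
Qed.

Lemma T_scale f s pi : inD d f pi ->
  T f (fun j x => s j * pi j x) = (\prod_(j < n) s j) * T f pi.
Proof.
move=> fpi; rewrite -T_scale_on ?index_enum_uniq //.
by congr (T f _); apply/funext => j; rewrite /scale_on mem_index_enum.
Qed.

End Homogeneity.

Section MassBound.
Variables (R : realType) (X : Type) (d : X -> X -> R) (n : nat).
Hypothesis d_ge0 : forall x y, 0 <= d x y.
Variable T : (X -> R) -> ('I_n -> X -> R) -> R.
Hypothesis T_ml : multilinear d T.
Variables (f : X -> R) (I : R).
Hypothesis I_ge0 : 0 <= I.
Hypothesis T_Linf_bound :
  forall pi, inD d f pi -> `|T f pi| <= Linf d pi ^+ n * I.
Implicit Types pi : 'I_n -> X -> R.

Lemma T_eq0_of_Lip_eq0 pi i : inD d f pi -> Lip d (pi i) = 0 -> T f pi = 0.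
Proof.
move=> fpi Lipi0; have pii_lip : is_lip d (pi i) by case: fpi.
set B := Linf d pi ^+ n * I.
have scaled_bound t : 0 < t -> t * `|T f pi| <= B.
  move=> t_gt0; pose pit := upd pi i (fun x => t * pi i x).
  have Linf_pit : Linf d pit <= Linf d pi.
    apply: Linf_le => [|j]; first exact: Linf_ge0.
    rewrite /pit /upd; case: eqP => _; last exact: Lip_le_Linf.
    apply: le_trans (LipZ_le d_ge0 t pii_lip) _.
    by rewrite Lipi0 mulr0 Linf_ge0.
  rewrite -(gtr0_norm t_gt0) -normrM -(T_updZ T_ml i t fpi).
  apply: le_trans (T_Linf_bound (inD_upd i fpi (is_lipZ t pii_lip))) _.
  by rewrite ler_wpM2r // lerXn2r // nnegrE Linf_ge0.
apply/eqP; apply: contraT; rewrite -normr_gt0 => T_gt0.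
have B_ge0 : 0 <= B by rewrite mulr_ge0 // exprn_ge0 // Linf_ge0.
have t_gt0 : 0 < (B + 1) / `|T f pi| := divr_gt0 (ltr_pwDr ltr01 B_ge0) T_gt0.
have := scaled_bound _ t_gt0.
by rewrite divfK ?gt_eqF // gerDl ler10.
Qed.

Lemma T_prodLip_bound pi : inD d f pi ->
  `|T f pi| <= (\prod_(i < n) Lip d (pi i)) * I.
Proof.
move=> fpi; have pi_lip : lip_tuple d pi by case: fpi.
have [[i Lipi0]|Lip_neq0] := pselect (exists i, Lip d (pi i) = 0).
  rewrite (T_eq0_of_Lip_eq0 fpi Lipi0) normr0 mulr_ge0 // prodr_ge0 // => j _.
  exact: Lip_ge0.
have Lip_gt0 j : 0 < Lip d (pi j).
  by rewrite lt_def Lip_ge0 // andbT; apply/eqP => Lipj0; apply: Lip_neq0; exists j.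
pose s j := (Lip d (pi j))^-1.
have s_ge0 j : 0 <= s j by rewrite invr_ge0 ltW.
have fpis : inD d f (fun j x => s j * pi j x).
  by case: fpi => f_bdd f_lip _; split=> // j; apply: is_lipZ.
have Linf_pis : Linf d (fun j x => s j * pi j x) <= 1.
  apply: Linf_le => // j; apply: le_trans (LipZ_le d_ge0 (s j) (pi_lip j)) _.
  by rewrite ger0_norm // mulVf // gt_eqF.
have := T_Linf_bound fpis.
rewrite (T_scale T_ml s fpi) normrM ger0_norm ?prodr_ge0 // => /le_trans scaled_bound.
have {scaled_bound} : \prod_(j < n) s j * `|T f pi| <= I.
  by apply/scaled_bound/ler_piMl => //; apply: exprn_ile1; rewrite ?Linf_ge0.
by rewrite /s prodfV ler_pdivrMl ?prodr_gt0.
Qed.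

End MassBound.

Section MassMeasure.
Variables (R : realType) (X : pointedType) (d : X -> X -> R) (n : nat).
Implicit Types (f : X -> R) (w : ('I_n -> X -> R) -> R).
Implicit Types (T : (X -> R) -> ('I_n -> X -> R) -> R).
Implicit Types (mu : {finite_measure set borel_space d -> \bar R}).

Local Notation integral_abs mu f := (\int[mu]_x (`|f x|)%:E)%E.

(* [f] need not be measurable, so the comparison with the constant [M] goes
   through the definition of the integral as a supremum over simple functions. *)
Lemma bdd_integral_abs_fin_num mu f : is_bdd f -> integral_abs mu f \is a fin_num.
Proof.
move=> [M fM]; have M_ge0 : 0 <= M by apply: le_trans (fM point).
rewrite ge0_fin_numE; last by apply: integral_ge0 => x _; rewrite lee_fin.
apply: (@le_lt_trans _ _ (M%:E * mu setT)%E); last first.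
  by rewrite ltey_eq fin_numM // fin_num_measure.
rewrite -(integral_cst mu measurableT M%:E) !ge0_integralTE => [|x|x]; rewrite ?lee_fin //.
apply: ereal_sup_le => _ [h hf <-]; exists h => //= x.
by apply: le_trans (hf x) _; rewrite lee_fin.
Qed.

Lemma mass_boundE w T mu : mass_bound d w T mu <->
  forall f pi, inD d f pi -> `|T f pi| <= w pi * fine (integral_abs mu f).
Proof.
have fineK_int f : is_bdd f -> integral_abs mu f = (fine (integral_abs mu f))%:E.
  by move=> f_bdd; rewrite fineK // bdd_integral_abs_fin_num.
split=> wT f pi fpi; have f_bdd : is_bdd f by case: fpi.
  by rewrite -lee_fin EFinM -fineK_int //; apply: wT.
by rewrite fineK_int // -EFinM lee_fin; apply: wT.
Qed.

Lemma mass_bound_prodLip_Linf T mu : (forall x y, 0 <= d x y) -> multilinear d T ->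
  mass_bound d (@prodLip R X d n) T mu <-> mass_bound d (fun pi => Linf d pi ^+ n) T mu.
Proof.
move=> d_ge0 T_ml.
have int_ge0 f : 0 <= fine (integral_abs mu f).
  by apply: fine_ge0; apply: integral_ge0 => x _; rewrite lee_fin.
rewrite !mass_boundE; split=> wT f pi fpi.
  apply: le_trans (wT f pi fpi) _; rewrite ler_wpM2r //.
  by apply: prod_Lip_le_Linf => //; case: fpi.
exact: (T_prodLip_bound d_ge0 T_ml (int_ge0 f) (wT f) fpi : _ <= prodLip d pi * _).
Qed.

End MassMeasure.

Theorem proposition1p2 (R : realType) (X : pointedType) (d : X -> X -> R)
    (n : nat) (T : (X -> R) -> ('I_n -> X -> R) -> R) :
  is_metric d -> dcomplete d -> (1 <= n)%N -> multilinear d T ->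
  (is_current d T <-> is_L_current d (Linf d (n:=n)) T) /\
  (forall mu : {finite_measure set borel_space d -> \bar R},
     is_mass_measure d T mu <-> is_L_mass_measure d (Linf d (n:=n)) T mu).
Proof.
move=> [d_ge0 _ _ _] _ _ T_ml.
have massE mu := mass_bound_prodLip_Linf mu d_ge0 T_ml.
split=> [|mu].
  split=> -[cT T_loc [mu T_mass]]; (split=> //; last exists mu);
    by [apply/continuity_AK_Linf | apply/massE].
split=> -[T_mass T_min]; split=> [|nu /massE]; by [apply/massE | apply: T_min].
Qed.
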